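(* Let $p\in\mathbb{C}$. Suppose that \[ e^{pz}K(\sqrt z)=\frac\pi2\sum_{n=0}^\infty u_nz^n,\qquad |z|<1. \] Then $u_0=1$, $u_1=\frac14(4p+1)$, $u_2=\frac1{64}(32p^2+16p+9)$, and for all integers $n\ge2$, \[ u_{n+1}=\frac{(2n+1)(2n+4p+1)}{4(n+1)^2}u_n-\frac{p(2n+p)}{(n+1)^2}u_{n-1}+\frac{p^2}{(n+1)^2}u_{n-2}. \]
   Context: $K$ denotes the complete elliptic integral of the first kind, $K(r)=\int_0^{\pi/2}\frac{dt}{\sqrt{1-r^2\sin^2t}}$; for complex $|z|<1$, $K(\sqrt z)$ is understood as $\frac\pi2F(\tfrac12,\tfrac12;1;z)$, where $F(a,b;c;z)=\sum_{n=0}^\infty\frac{(a)_n(b)_n}{(c)_n\,n!}z^n$ is the Gaussian hypergeometric function and $(a)_n=a(a+1)\cdots(a+n-1)$, $(a)_0=1$. *)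

From Stdlib Require Import Reals Arith Factorial.
From Coquelicot Require Export Coquelicot.
Open Scope C_scope.

Definition Cexp (z : C) : C :=
  (exp (fst z) * cos (snd z), exp (fst z) * sin (snd z))%R.

(* Sum of a complex series, taken componentwise (total operator; equals the
   actual sum whenever the series converges). *)
Definition CSeries (a : nat -> C) : C :=
  (Series (fun n => fst (a n)), Series (fun n => snd (a n))).

Fixpoint poch (a : C) (n : nat) : C :=
  match n with
  | O => 1
  | S m => poch a m * (a + INR m)
  end.

Definition hyp2F1 (a b c z : C) : C :=
  CSeries (fun n => poch a n * poch b n / (poch c n * INR (fact n)) * z ^ n).

Definition Ksqrt (z : C) : C := (PI / 2)%R * hyp2F1 (1/2) (1/2) 1 z.

From Stdlib Require Import Reals Lra Lia Factorial.
From Coquelicot Require Import Coquelicot.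
Open Scope C_scope.

(* y(t) = F(1/2,1/2;1;t) satisfies t(1-t) y'' + (1-2t) y' - y/4 = 0. Since
   (D - p)(e^{pt} g) = e^{pt} g' for D = d/dt, the product f = e^{pt} y satisfies the
   same equation with D replaced by D - p, and comparing coefficients of t^n in it
   gives the four-term recurrence for the u_n.  All of this happens on the real
   interval (-1/2, 1/2): a complex power series is handled through the real power
   series of its real and imaginary parts, and the identity theorem for real power
   series turns equality of functions into equality of coefficients. *)

Lemma C_neq_0_of_fst (z : C) : fst z <> 0%R -> z <> 0.
Proof. intros Hz H. apply Hz. rewrite H. reflexivity. Qed.

Lemma RtoC_INR_S_neq_0 (n : nat) : RtoC (INR n) + 1 <> 0.
Proof. apply C_neq_0_of_fst. simpl. pose proof (pos_INR n). lra. Qed.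

Lemma Cmult_RtoC_pow (c : C) (t : R) (n : nat) :
  c * RtoC t ^ n = (fst c * t ^ n, snd c * t ^ n)%R.
Proof. rewrite <- RtoC_pow. apply injective_projections; simpl; ring. Qed.

Lemma locally_Rabs_lt (r t : R) : (Rabs t < r)%R -> locally t (fun x => Rabs x < r)%R.
Proof.
  intros Ht. apply (filter_imp (fun x => - r < x /\ x < r)%R).
  - intros x Hx. apply Rabs_def1; tauto.
  - apply (open_and _ _ (open_gt (- r)) (open_lt r)).
    apply Rabs_def2 in Ht. tauto.
Qed.

Lemma CV_radius_lin (r c1 c2 : R) (a b : nat -> R) :
  Rbar_le r (CV_radius a) -> Rbar_le r (CV_radius b) ->
  Rbar_le r (CV_radius (fun n => c1 * a n + c2 * b n)%R).
Proof.
  assert (Hscal : forall c x, Rbar_le r (CV_radius x) -> Rbar_le r (CV_radius (PS_scal c x))).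
  { intros c x Hx. destruct (Req_dec c 0) as [->|Hc].
    - rewrite (CV_radius_ext _ (fun _ => 0%R)), CV_radius_const_0; [easy|].
      intros n. apply Rmult_0_l.
    - rewrite CV_radius_scal; assumption. }
  intros Ha Hb.
  eapply Rbar_le_trans; [|apply (CV_radius_plus (PS_scal c1 a) (PS_scal c2 b))].
  apply Rbar_min_case; apply Hscal; assumption.
Qed.

Lemma CV_radius_ge_of_ex_series (a : nat -> R) (r : R) :
  ex_series (fun n => a n * r ^ n)%R -> Rbar_le r (CV_radius a).
Proof.
  intros Ha. apply ex_series_lim_0 in Ha.
  destruct (filterlim_bounded (fun n => a n * r ^ n)%R) as [M HM].
  { exists 0%R. exact Ha. }
  apply (CV_radius_bounded a). exists M. exact HM.
Qed.

Lemma CV_radius_ge_of_abs_le_1 (a : nat -> R) (r : R) :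
  (0 <= r <= 1)%R -> (forall n, Rabs (a n) <= 1)%R -> Rbar_le r (CV_radius a).
Proof.
  intros Hr Ha. apply (CV_radius_bounded a). exists 1%R. intros n.
  assert (Hpow : (0 <= r ^ n <= 1)%R).
  { split; [apply pow_le; lra|]. rewrite <- (pow1 n). apply pow_incr. lra. }
  rewrite Rabs_mult, (Rabs_pos_eq (r ^ n)) by apply Hpow.
  pose proof (Ha n). pose proof (Rabs_pos (a n)). nra.
Qed.

Lemma ex_pseries_lin (c1 c2 : R) (a b : nat -> R) (t : R) :
  ex_pseries a t -> ex_pseries b t ->
  ex_pseries (fun n => c1 * a n + c2 * b n)%R t.
Proof.
  intros Ha Hb.
  apply (ex_pseries_plus (PS_scal c1 a) (PS_scal c2 b));
    apply ex_pseries_scal; auto using Rmult_comm.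
Qed.

Lemma PSeries_lin (c1 c2 : R) (a b : nat -> R) (t : R) :
  ex_pseries a t -> ex_pseries b t ->
  PSeries (fun n => c1 * a n + c2 * b n)%R t = (c1 * PSeries a t + c2 * PSeries b t)%R.
Proof.
  intros Ha Hb.
  change (PSeries (PS_plus (PS_scal c1 a) (PS_scal c2 b)) t
          = (c1 * PSeries a t + c2 * PSeries b t)%R).
  rewrite PSeries_plus, !PSeries_scal by (apply ex_pseries_scal; auto using Rmult_comm).
  reflexivity.
Qed.

Lemma PSeries_coef_eq_0 (a : nat -> R) (r : R) :
  (0 < r)%R -> Rbar_le r (CV_radius a) ->
  (forall t, (Rabs t < r)%R -> PSeries a t = 0%R) -> forall n, a n = 0%R.
Proof.
  intros Hr Ha Ha0 n.
  apply (PSeries_ext_recip a (fun _ => 0%R)).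
  - apply (Rbar_lt_le_trans _ r); assumption.
  - rewrite CV_radius_const_0. easy.
  - apply (filter_imp _ _ (fun t Ht => eq_trans (Ha0 t Ht) (eq_sym (PSeries_const_0 t)))).
    apply locally_Rabs_lt. rewrite Rabs_R0. exact Hr.
Qed.

(** * Complex power series at real points *)

Definition CPSeries (a : nat -> C) (t : R) : C :=
  (PSeries (fun n => fst (a n)) t, PSeries (fun n => snd (a n)) t).

Definition CPS_radius_ge (r : R) (a : nat -> C) : Prop :=
  Rbar_le r (CV_radius (fun n => fst (a n))) /\
  Rbar_le r (CV_radius (fun n => snd (a n))).

Definition CPS_lin (x : C) (a : nat -> C) (y : C) (b : nat -> C) : nat -> C :=
  fun n => x * a n + y * b n.

Definition CPS_derive (a : nat -> C) : nat -> C := fun n => INR (S n) * a (S n).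

Definition CPS_incr_1 (a : nat -> C) : nat -> C :=
  fun n => match n with O => 0 | S k => a k end.

(* Shaped so that CV_radius_lin and PSeries_lin apply twice. *)
Lemma CPS_lin_components (x y : C) (a b : nat -> C) (n : nat) :
  fst (CPS_lin x a y b n) =
    (1 * (fst x * fst (a n) + - snd x * snd (a n))
     + 1 * (fst y * fst (b n) + - snd y * snd (b n)))%R /\
  snd (CPS_lin x a y b n) =
    (1 * (fst x * snd (a n) + snd x * fst (a n))
     + 1 * (fst y * snd (b n) + snd y * fst (b n)))%R.
Proof. unfold CPS_lin; simpl; split; ring. Qed.

Lemma CPS_radius_ge_lin (r : R) (x y : C) (a b : nat -> C) :
  CPS_radius_ge r a -> CPS_radius_ge r b -> CPS_radius_ge r (CPS_lin x a y b).
Proof.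
  intros [Ha1 Ha2] [Hb1 Hb2]; split.
  - rewrite (CV_radius_ext _ _ (fun n => proj1 (CPS_lin_components x y a b n))).
    apply CV_radius_lin; apply CV_radius_lin; assumption.
  - rewrite (CV_radius_ext _ _ (fun n => proj2 (CPS_lin_components x y a b n))).
    apply CV_radius_lin; apply CV_radius_lin; assumption.
Qed.

Lemma CPS_radius_ge_derive (r : R) (a : nat -> C) :
  CPS_radius_ge r a -> CPS_radius_ge r (CPS_derive a).
Proof.
  intros [H1 H2]; split.
  - rewrite (CV_radius_ext _ (PS_derive (fun n => fst (a n)))), CV_radius_derive by
      (intros n; unfold CPS_derive, PS_derive; simpl; ring).
    exact H1.
  - rewrite (CV_radius_ext _ (PS_derive (fun n => snd (a n)))), CV_radius_derive by
      (intros n; unfold CPS_derive, PS_derive; simpl; ring).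
    exact H2.
Qed.

Lemma CPS_radius_ge_incr_1 (r : R) (a : nat -> C) :
  CPS_radius_ge r a -> CPS_radius_ge r (CPS_incr_1 a).
Proof.
  intros [H1 H2]; split.
  - rewrite (CV_radius_ext _ (PS_incr_1 (fun n => fst (a n)))), CV_radius_incr_1 by
      (intros [|n]; reflexivity).
    exact H1.
  - rewrite (CV_radius_ext _ (PS_incr_1 (fun n => snd (a n)))), CV_radius_incr_1 by
      (intros [|n]; reflexivity).
    exact H2.
Qed.

Lemma CPS_radius_ge_of_Cmod_le_1 (r : R) (a : nat -> C) :
  (0 <= r <= 1)%R -> (forall n, Cmod (a n) <= 1)%R -> CPS_radius_ge r a.
Proof.
  intros Hr Ha.
  split; apply CV_radius_ge_of_abs_le_1; try exact Hr; intros n;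
    pose proof (Rmax_Cmod (a n)); pose proof (Ha n);
    pose proof (Rmax_l (Rabs (fst (a n))) (Rabs (snd (a n))));
    pose proof (Rmax_r (Rabs (fst (a n))) (Rabs (snd (a n)))); lra.
Qed.

Lemma CPS_radius_ge_inside (r t : R) (a : nat -> C) :
  CPS_radius_ge r a -> (Rabs t < r)%R ->
  ex_pseries (fun n => fst (a n)) t /\ ex_pseries (fun n => snd (a n)) t.
Proof.
  intros [H1 H2] Ht; split; apply CV_radius_inside;
    apply (Rbar_lt_le_trans _ r); assumption.
Qed.

Lemma CPSeries_lin (r t : R) (x y : C) (a b : nat -> C) :
  CPS_radius_ge r a -> CPS_radius_ge r b -> (Rabs t < r)%R ->
  CPSeries (CPS_lin x a y b) t = x * CPSeries a t + y * CPSeries b t.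
Proof.
  intros Ha Hb Ht.
  destruct (CPS_radius_ge_inside r t a Ha Ht) as [Ha1 Ha2].
  destruct (CPS_radius_ge_inside r t b Hb Ht) as [Hb1 Hb2].
  unfold CPSeries.
  rewrite (PSeries_ext _ _ t (fun n => proj1 (CPS_lin_components x y a b n))),
    (PSeries_ext _ _ t (fun n => proj2 (CPS_lin_components x y a b n))).
  rewrite !PSeries_lin by auto using ex_pseries_lin.
  apply injective_projections; simpl; ring.
Qed.

Lemma CPSeries_incr_1 (a : nat -> C) (t : R) :
  CPSeries (CPS_incr_1 a) t = t * CPSeries a t.
Proof.
  unfold CPSeries; apply injective_projections; simpl.
  - rewrite (PSeries_ext _ (PS_incr_1 (fun n => fst (a n)))), PSeries_incr_1 by
      (intros [|n]; reflexivity).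
    ring.
  - rewrite (PSeries_ext _ (PS_incr_1 (fun n => snd (a n)))), PSeries_incr_1 by
      (intros [|n]; reflexivity).
    ring.
Qed.

Lemma CPSeries_0 (a : nat -> C) : CPSeries a 0 = a O.
Proof. unfold CPSeries. rewrite !PSeries_0. destruct (a O); reflexivity. Qed.

Lemma CPSeries_eq_0 (a : nat -> C) (t : R) : (forall n, a n = 0) -> CPSeries a t = 0.
Proof.
  intros Ha. unfold CPSeries.
  rewrite (PSeries_ext _ (fun _ => 0%R)), (PSeries_ext (fun n => snd (a n)) (fun _ => 0%R)),
    PSeries_const_0 by (intros n; rewrite Ha; reflexivity).
  reflexivity.
Qed.

Lemma CPS_coef_eq_0 (r : R) (a : nat -> C) :
  (0 < r)%R -> CPS_radius_ge r a ->
  (forall t, (Rabs t < r)%R -> CPSeries a t = 0) -> forall n, a n = 0.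
Proof.
  intros Hr [H1 H2] Ha n. apply injective_projections.
  - apply (PSeries_coef_eq_0 (fun n => fst (a n)) r Hr H1).
    intros t Ht. exact (f_equal fst (Ha t Ht)).
  - apply (PSeries_coef_eq_0 (fun n => snd (a n)) r Hr H2).
    intros t Ht. exact (f_equal snd (Ha t Ht)).
Qed.

Lemma is_series_C_components (a : nat -> C) (l : C) :
  is_series (V := C_NormedModule) a l ->
  is_series (fun n => fst (a n)) (fst l) /\ is_series (fun n => snd (a n)) (snd l).
Proof.
  intros Ha.
  assert (Hsum : forall n, @sum_n C_AbelianMonoid a n
                  = (sum_n (fun k => fst (a k)) n, sum_n (fun k => snd (a k)) n)).
  { induction n as [|n IH].
    - rewrite !sum_O. apply surjective_pairing.
    - rewrite !sum_Sn, IH. reflexivity. }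
  destruct l as [l1 l2]. split.
  - eapply filterlim_ext; [|eapply filterlim_comp; [exact Ha|apply (continuous_fst l1 l2)]].
    intros n. exact (f_equal fst (Hsum n)).
  - eapply filterlim_ext; [|eapply filterlim_comp; [exact Ha|apply (continuous_snd l1 l2)]].
    intros n. exact (f_equal snd (Hsum n)).
Qed.

Lemma is_series_CPS_components (a : nat -> C) (t : R) (s : C) :
  is_series (V := C_NormedModule) (fun n => a n * RtoC t ^ n) s ->
  is_series (fun n => fst (a n) * t ^ n)%R (fst s) /\
  is_series (fun n => snd (a n) * t ^ n)%R (snd s).
Proof.
  intros Hs. destruct (is_series_C_components _ _ Hs) as [H1 H2].
  split; eapply is_series_ext; try eassumption;
    intros n; cbv beta; rewrite Cmult_RtoC_pow; reflexivity.
Qed.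

Lemma CPSeries_of_is_series (a : nat -> C) (t : R) (s : C) :
  is_series (V := C_NormedModule) (fun n => a n * RtoC t ^ n) s -> CPSeries a t = s.
Proof.
  intros Hs. destruct (is_series_CPS_components a t s Hs) as [H1 H2].
  unfold CPSeries, PSeries. rewrite (is_series_unique _ _ H1), (is_series_unique _ _ H2).
  symmetry. apply surjective_pairing.
Qed.

Lemma CPS_radius_ge_of_is_series (a : nat -> C) (r : R) (s : C) :
  is_series (V := C_NormedModule) (fun n => a n * RtoC r ^ n) s -> CPS_radius_ge r a.
Proof.
  intros Hs. destruct (is_series_CPS_components a r s Hs) as [H1 H2].
  split; apply CV_radius_ge_of_ex_series; eexists; eassumption.
Qed.

Lemma CPSeries_CSeries (a : nat -> C) (t : R) :
  CPSeries a t = CSeries (fun n => a n * RtoC t ^ n).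
Proof.
  unfold CPSeries, CSeries, PSeries.
  f_equal; apply Series_ext; intros n; rewrite Cmult_RtoC_pow; reflexivity.
Qed.

Definition is_derive_C (f : R -> C) (t : R) (l : C) : Prop :=
  is_derive (fun x => fst (f x)) t (fst l) /\ is_derive (fun x => snd (f x)) t (snd l).

Lemma is_derive_C_mult (f g : R -> C) (t : R) (lf lg : C) :
  is_derive_C f t lf -> is_derive_C g t lg ->
  is_derive_C (fun x => f x * g x) t (lf * g t + f t * lg).
Proof.
  intros [F1 F2] [G1 G2].
  assert (M : forall h k dh dk, is_derive h t dh -> is_derive k t dk ->
    is_derive (fun x => h x * k x)%R t (dh * k t + h t * dk)%R).
  { intros h k dh dk Hh Hk. exact (is_derive_mult h k t dh dk Hh Hk Rmult_comm). }
  split; simpl.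
  - replace (fst lf * fst (g t) - snd lf * snd (g t)
             + (fst (f t) * fst lg - snd (f t) * snd lg))%R
      with (minus (fst lf * fst (g t) + fst (f t) * fst lg)%R
                  (snd lf * snd (g t) + snd (f t) * snd lg)%R)
      by (unfold minus, plus, opp; simpl; ring).
    exact (is_derive_minus _ _ t _ _ (M _ _ _ _ F1 G1) (M _ _ _ _ F2 G2)).
  - replace (fst lf * snd (g t) + snd lf * fst (g t)
             + (fst (f t) * snd lg + snd (f t) * fst lg))%R
      with (plus (fst lf * snd (g t) + fst (f t) * snd lg)%R
                 (snd lf * fst (g t) + snd (f t) * fst lg)%R)
      by (unfold plus; simpl; ring).
    exact (is_derive_plus _ _ t _ _ (M _ _ _ _ F1 G2) (M _ _ _ _ F2 G1)).
Qed.

Lemma is_derive_C_Cexp (p : C) (t : R) :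
  is_derive_C (fun x => Cexp (p * x)) t (p * Cexp (p * t)).
Proof. unfold Cexp; split; simpl; auto_derive; auto; unfold Rminus; ring. Qed.

Lemma Cexp_0 : Cexp 0 = 1.
Proof.
  unfold Cexp. simpl. rewrite exp_0, cos_0, sin_0.
  apply injective_projections; simpl; ring.
Qed.

Lemma is_derive_C_CPSeries (r t : R) (a : nat -> C) :
  CPS_radius_ge r a -> (Rabs t < r)%R ->
  is_derive_C (CPSeries a) t (CPSeries (CPS_derive a) t).
Proof.
  intros [H1 H2] Ht; split; simpl.
  - rewrite (PSeries_ext _ (PS_derive (fun n => fst (a n)))) by
      (intros n; unfold CPS_derive, PS_derive; simpl; ring).
    apply is_derive_PSeries, (Rbar_lt_le_trans _ r); assumption.
  - rewrite (PSeries_ext _ (PS_derive (fun n => snd (a n)))) by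
      (intros n; unfold CPS_derive, PS_derive; simpl; ring).
    apply is_derive_PSeries, (Rbar_lt_le_trans _ r); assumption.
Qed.

Lemma is_derive_C_unique_loc (f g : R -> C) (t : R) (lf lg : C) :
  locally t (fun x => f x = g x) ->
  is_derive_C f t lf -> is_derive_C g t lg -> lf = lg.
Proof.
  intros Hfg [F1 F2] [G1 G2].
  apply (is_derive_ext_loc _ (fun x => fst (g x))) in F1;
    [|eapply filter_imp; [|exact Hfg]; intros x ->; reflexivity].
  apply (is_derive_ext_loc _ (fun x => snd (g x))) in F2;
    [|eapply filter_imp; [|exact Hfg]; intros x ->; reflexivity].
  apply is_derive_unique in F1, F2, G1, G2.
  apply injective_projections; congruence.
Qed.

(** * The conjugated hypergeometric operator *)

Definition CPS_Dsub (p : C) (a : nat -> C) : nat -> C := CPS_lin 1 (CPS_derive a) (- p) a.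

(* Coefficients of t(1-t) (D-p)^2 y + (1-2t) (D-p) y - y/4, where D = d/dt and
   CPS_Dsub p encodes D - p; for p = 0 this is the hypergeometric operator with
   parameters (1/2, 1/2; 1). *)
Definition hgeom_op (p : C) (a : nat -> C) : nat -> C :=
  CPS_lin 1 (CPS_lin 1 (CPS_incr_1 (CPS_Dsub p (CPS_Dsub p a)))
                     (-1) (CPS_incr_1 (CPS_incr_1 (CPS_Dsub p (CPS_Dsub p a)))))
          1 (CPS_lin 1 (CPS_lin 1 (CPS_Dsub p a) (-2) (CPS_incr_1 (CPS_Dsub p a)))
                     (- (1/4)) a).

Lemma hgeom_op_coef (p : C) (a : nat -> C) (n : nat) :
  hgeom_op p a n =
    (INR n + 1) ^ 2 * a (S n)
    - (2 * INR n + 1) * (2 * INR n + 4 * p + 1) / 4 * a n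
    + p * (2 * INR n + p) * CPS_incr_1 a n
    - p ^ 2 * CPS_incr_1 (CPS_incr_1 a) n.
Proof.
  unfold hgeom_op, CPS_Dsub, CPS_lin, CPS_derive, CPS_incr_1.
  destruct n as [|[|n]]; rewrite ?S_INR, ?RtoC_plus; simpl; field.
Qed.

Lemma hgeom_op_eq_0_rec (p : C) (a : nat -> C) (n : nat) :
  hgeom_op p a n = 0 ->
  a (S n) =
    (2 * INR n + 1) * (2 * INR n + 4 * p + 1) / (4 * (INR n + 1) ^ 2) * a n
    - p * (2 * INR n + p) / ((INR n + 1) ^ 2) * CPS_incr_1 a n
    + p ^ 2 / ((INR n + 1) ^ 2) * CPS_incr_1 (CPS_incr_1 a) n.
Proof.
  rewrite hgeom_op_coef. intros H.
  apply Ceq_minus. transitivity (/ (RtoC (INR n) + 1) ^ 2 * 0); [|ring].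
  rewrite <- H. field. apply RtoC_INR_S_neq_0.
Qed.

Lemma CPS_radius_ge_Dsub (r : R) (p : C) (a : nat -> C) :
  CPS_radius_ge r a -> CPS_radius_ge r (CPS_Dsub p a).
Proof. intros Ha. apply CPS_radius_ge_lin; auto using CPS_radius_ge_derive. Qed.

#[local] Hint Resolve CPS_radius_ge_lin CPS_radius_ge_incr_1 CPS_radius_ge_Dsub : cps_radius.

Lemma CPS_radius_ge_hgeom_op (r : R) (p : C) (a : nat -> C) :
  CPS_radius_ge r a -> CPS_radius_ge r (hgeom_op p a).
Proof. intros Ha. unfold hgeom_op. auto 10 with cps_radius. Qed.

Section ExponentialShift.

Variables (r : R) (p : C).

Lemma CPSeries_Dsub_Cexp (a b : nat -> C) :
  CPS_radius_ge r a -> CPS_radius_ge r b ->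
  (forall t, (Rabs t < r)%R -> CPSeries a t = Cexp (p * t) * CPSeries b t) ->
  forall t, (Rabs t < r)%R ->
    CPSeries (CPS_Dsub p a) t = Cexp (p * t) * CPSeries (CPS_Dsub 0 b) t.
Proof.
  intros Ha Hb Hab t Ht. unfold CPS_Dsub.
  rewrite !(CPSeries_lin r) by auto using CPS_radius_ge_derive.
  assert (Hloc : locally t (fun x => CPSeries a x = Cexp (p * x) * CPSeries b x))
    by exact (filter_imp _ _ Hab (locally_Rabs_lt r t Ht)).
  rewrite (is_derive_C_unique_loc _ _ t _ _ Hloc (is_derive_C_CPSeries r t a Ha Ht)
             (is_derive_C_mult _ _ t _ _ (is_derive_C_Cexp p t)
                                         (is_derive_C_CPSeries r t b Hb Ht))).
  rewrite (Hab t Ht). ring.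
Qed.

Lemma CPSeries_hgeom_op_Cexp (a b : nat -> C) :
  CPS_radius_ge r a -> CPS_radius_ge r b ->
  (forall t, (Rabs t < r)%R -> CPSeries a t = Cexp (p * t) * CPSeries b t) ->
  forall t, (Rabs t < r)%R ->
    CPSeries (hgeom_op p a) t = Cexp (p * t) * CPSeries (hgeom_op 0 b) t.
Proof.
  intros Ha Hb Hab.
  assert (H1 := CPSeries_Dsub_Cexp a b Ha Hb Hab).
  assert (H2 := CPSeries_Dsub_Cexp _ _ (CPS_radius_ge_Dsub r p a Ha)
                  (CPS_radius_ge_Dsub r 0 b Hb) H1).
  intros t Ht. unfold hgeom_op.
  rewrite !(CPSeries_lin r), !CPSeries_incr_1 by auto 10 with cps_radius.
  rewrite H1, H2, Hab by assumption. ring.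
Qed.

Lemma hgeom_op_eq_0_of_Cexp (u b : nat -> C) :
  (0 < r)%R -> CPS_radius_ge r u -> CPS_radius_ge r b ->
  (forall t, (Rabs t < r)%R -> CPSeries u t = Cexp (p * t) * CPSeries b t) ->
  (forall n, hgeom_op 0 b n = 0) -> forall n, hgeom_op p u n = 0.
Proof.
  intros Hr Hu Hb Hub Hb0.
  apply (CPS_coef_eq_0 r); auto using CPS_radius_ge_hgeom_op.
  intros t Ht. rewrite (CPSeries_hgeom_op_Cexp u b Hu Hb Hub t Ht).
  rewrite (CPSeries_eq_0 _ t Hb0). ring.
Qed.

End ExponentialShift.

(** * Coefficients of F(1/2, 1/2; 1; t) *)

Definition hyp_coef (a b c : C) (n : nat) : C :=
  poch a n * poch b n / (poch c n * INR (fact n)).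

Lemma RtoC_INR_fact_neq_0 (n : nat) : RtoC (INR (fact n)) <> 0.
Proof. apply C_neq_0_of_fst, INR_fact_neq_0. Qed.

Lemma hyp_coef_S (a b c : C) (n : nat) :
  poch c (S n) <> 0 ->
  hyp_coef a b c (S n) =
    hyp_coef a b c n * ((a + INR n) * (b + INR n) / ((c + INR n) * (INR n + 1))).
Proof.
  simpl. intros Hc.
  assert (Hc1 : poch c n <> 0) by (intros H; apply Hc; rewrite H; ring).
  assert (Hc2 : c + INR n <> 0) by (intros H; apply Hc; rewrite H; ring).
  unfold hyp_coef. cbn [poch].
  rewrite fact_simpl, mult_INR, RtoC_mult, S_INR, RtoC_plus.
  field. repeat split; auto using RtoC_INR_S_neq_0, RtoC_INR_fact_neq_0.
Qed.

Lemma poch_1 (n : nat) : poch 1 n = INR (fact n).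
Proof.
  induction n as [|n IH]; [reflexivity|].
  cbn [poch]. rewrite IH, fact_simpl, mult_INR, RtoC_mult, S_INR, RtoC_plus. ring.
Qed.

Definition K_coef : nat -> C := hyp_coef (1/2) (1/2) 1.

Lemma K_coef_0 : K_coef 0 = 1.
Proof. unfold K_coef, hyp_coef. simpl. field. Qed.

Lemma K_coef_S (n : nat) :
  K_coef (S n) = K_coef n * RtoC (((2 * INR n + 1) / (2 * INR n + 2)) ^ 2).
Proof.
  unfold K_coef. rewrite hyp_coef_S by (rewrite poch_1; apply RtoC_INR_fact_neq_0).
  pose proof (pos_INR n).
  rewrite RtoC_pow, RtoC_div, !RtoC_plus, RtoC_mult by lra.
  f_equal. field. split; apply C_neq_0_of_fst; simpl; lra.
Qed.

Lemma Cmod_K_coef_le_1 (n : nat) : (Cmod (K_coef n) <= 1)%R.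
Proof.
  induction n as [|n IH].
  - rewrite K_coef_0, Cmod_1. lra.
  - rewrite K_coef_S, Cmod_mult, Cmod_R.
    pose proof (pos_INR n).
    assert (Hq : (0 <= (2 * INR n + 1) / (2 * INR n + 2) <= 1)%R).
    { split; [apply Rdiv_le_0_compat; lra|]. apply Rle_div_l; lra. }
    assert (((2 * INR n + 1) / (2 * INR n + 2)) ^ 2 <= 1 ^ 2)%R by (apply pow_incr; lra).
    rewrite Rabs_pos_eq by (apply pow_le; lra).
    pose proof (Cmod_ge_0 (K_coef n)). nra.
Qed.

Lemma CPS_radius_ge_K_coef : CPS_radius_ge (1/2) K_coef.
Proof. apply CPS_radius_ge_of_Cmod_le_1; [lra|exact Cmod_K_coef_le_1]. Qed.

Lemma hgeom_op_K_coef (n : nat) : hgeom_op 0 K_coef n = 0.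
Proof.
  rewrite hgeom_op_coef, K_coef_S.
  pose proof (pos_INR n).
  rewrite RtoC_pow, RtoC_div, !RtoC_plus, RtoC_mult by lra.
  field. apply C_neq_0_of_fst. simpl. lra.
Qed.

(** * The expansion of e^{pz} K(sqrt z) *)

Definition Cexp_K_expansion (p : C) (u : nat -> C) : Prop :=
  forall z : C, (Cmod z < 1)%R ->
    exists s : C,
      is_series (V := C_NormedModule) (fun n => u n * z ^ n) s /\
      Cexp (p * z) * Ksqrt z = (PI / 2)%R * s.

Lemma CPSeries_of_Cexp_K_expansion (p : C) (u : nat -> C) (t : R) :
  Cexp_K_expansion p u -> (Rabs t < 1)%R ->
  CPSeries u t = Cexp (p * t) * CPSeries K_coef t.
Proof.
  intros Hexp Ht.
  destruct (Hexp (RtoC t)) as [s [Hs Heq]]; [rewrite Cmod_R; exact Ht|].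
  rewrite (CPSeries_of_is_series u t s Hs), CPSeries_CSeries.
  assert (Hpi : RtoC (PI / 2) <> 0)
    by (apply C_neq_0_of_fst; simpl; pose proof PI_RGT_0; lra).
  replace s with (/ RtoC (PI / 2) * (RtoC (PI / 2) * s)) by (field; exact Hpi).
  rewrite <- Heq. unfold Ksqrt.
  change (hyp2F1 (1/2) (1/2) 1 t) with (CSeries (fun n => K_coef n * RtoC t ^ n)).
  field. exact Hpi.
Qed.

Lemma CPS_radius_ge_of_Cexp_K_expansion (p : C) (u : nat -> C) :
  Cexp_K_expansion p u -> CPS_radius_ge (1/2) u.
Proof.
  intros Hexp.
  destruct (Hexp (RtoC (1/2))) as [s [Hs _]].
  { rewrite Cmod_R, Rabs_pos_eq; lra. }
  exact (CPS_radius_ge_of_is_series u _ s Hs).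
Qed.

Lemma hgeom_op_of_Cexp_K_expansion (p : C) (u : nat -> C) :
  Cexp_K_expansion p u -> forall n, hgeom_op p u n = 0.
Proof.
  intros Hexp.
  apply (hgeom_op_eq_0_of_Cexp (1/2) p u K_coef); try lra.
  - exact (CPS_radius_ge_of_Cexp_K_expansion p u Hexp).
  - exact CPS_radius_ge_K_coef.
  - intros t Ht. apply CPSeries_of_Cexp_K_expansion; [exact Hexp|lra].
  - exact hgeom_op_K_coef.
Qed.

Lemma Cexp_K_expansion_coef_0 (p : C) (u : nat -> C) :
  Cexp_K_expansion p u -> u 0%nat = 1.
Proof.
  intros Hexp.
  assert (H0 := CPSeries_of_Cexp_K_expansion p u 0 Hexp ltac:(rewrite Rabs_R0; lra)).
  rewrite !CPSeries_0, K_coef_0, Cmult_0_r, Cexp_0 in H0. rewrite H0. ring.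
Qed.

Theorem corollary4p1 (p : C) (u : nat -> C) :
  (forall z : C, (Cmod z < 1)%R ->
     exists s : C,
       is_series (V := C_NormedModule) (fun n => u n * z ^ n) s /\
       Cexp (p * z) * Ksqrt z = (PI / 2)%R * s) ->
  u 0%nat = 1 /\
  u 1%nat = (1/4) * (4 * p + 1) /\
  u 2%nat = (1/64) * (32 * p ^ 2 + 16 * p + 9) /\
  (forall n : nat, (2 <= n)%nat ->
     u (S n) =
       (2 * INR n + 1) * (2 * INR n + 4 * p + 1) / (4 * (INR n + 1) ^ 2) * u n
       - p * (2 * INR n + p) / ((INR n + 1) ^ 2) * u (n - 1)%nat
       + p ^ 2 / ((INR n + 1) ^ 2) * u (n - 2)%nat).
Proof.
  intros Hexp.
  assert (Hode := hgeom_op_of_Cexp_K_expansion p u Hexp).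
  assert (U0 := Cexp_K_expansion_coef_0 p u Hexp).
  assert (U1 : u 1%nat = (1/4) * (4 * p + 1)).
  { rewrite (hgeom_op_eq_0_rec p u 0 (Hode 0%nat)), U0.
    change (INR 0) with 0%R. simpl CPS_incr_1. field. }
  assert (U2 : u 2%nat = (1/64) * (32 * p ^ 2 + 16 * p + 9)).
  { rewrite (hgeom_op_eq_0_rec p u 1 (Hode 1%nat)), U1. simpl CPS_incr_1. rewrite U0.
    change (INR 1) with 1%R. field. }
  split; [exact U0|]. split; [exact U1|]. split; [exact U2|].
  intros n Hn. rewrite (hgeom_op_eq_0_rec p u n (Hode n)).
  destruct n as [|[|n]]; [lia|lia|].
  replace (S (S n) - 1)%nat with (S n) by lia.
  replace (S (S n) - 2)%nat with n by lia.
  reflexivity.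
Qed.
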